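(* Let $\mathbf{H}\in\mathbb{R}^{n\times m}$ be a random matrix (of arbitrary distribution not depending on $\rho$), $\mathbf{v}\sim\mathcal{N}(\mathbf{0},\rho^{-1}\mathbf{I}_n)$ independent of $\mathbf{H}$, $\mathbf{y}=\mathbf{H}\mathbf{e}+\mathbf{v}$, and let $\tau$ be as defined in the context (a function of $\mathbf{H}$ only). Let $d\in[0,\infty)$. If $\Pr(\tau\le\rho^{-1})\ \dot\le\ \rho^{-d}$, then $\Pr(\hat{\mathbf{s}}_{\mathrm{SDR}}\neq\mathbf{e})\ \dot\le\ \rho^{-d}$.
   Context: $\mathbf{e}$ is the all-ones vector. $\mathcal{X}=\{\mathbf{X}\in\mathbb{S}^{m+1}:\mathrm{diag}(\mathbf{X})=\mathbf{e},\mathbf{X}\succeq\mathbf{0}\}$, $\mathbf{M}=[\mathbf{I}_m\ -\mathbf{e}]$, $\mathcal{H}=\{\mathbf{X}\in\mathbb{S}^{m+1}:\mathrm{Tr}(\mathbf{M}\mathbf{X}\mathbf{M}^T)=1\}$, $\mathbf{L}_0=\mathbf{M}^T\mathbf{H}^T\mathbf{H}\mathbf{M}$, $\tau=\min_{\mathbf{X}\in\mathcal{X}\cap\mathcal{H}}\mathrm{Tr}(\mathbf{L}_0\mathbf{X})$. The SDR estimate: with $\mathbf{L}=\begin{bmatrix}\mathbf{H}^T\mathbf{H}&-\mathbf{H}^T\mathbf{y}\\-\mathbf{y}^T\mathbf{H}&\mathbf{y}^T\mathbf{y}\end{bmatrix}$ and $\mathbf{X}^\star$ an optimal point (fixed selection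 rule) of $\min_{\mathbf{X}\in\mathcal{X}}\mathrm{Tr}(\mathbf{L}\mathbf{X})$, $[\hat{\mathbf{s}}_{\mathrm{SDR}}]_i=\mathrm{sgn}([\mathbf{X}^\star]_{i,m+1})$ ($\mathrm{sgn}(x)=1$ if $x>0$, $-1$ otherwise). Notation: $f(\rho)\ \dot\le\ \rho^{-d}$ means $\limsup_{\rho\to\infty}\ln f(\rho)/\ln\rho\le -d$. *)

From HB Require Import structures.
From mathcomp Require Import all_boot all_order all_algebra.
From mathcomp Require Import all_classical all_reals all_analysis.
Set Implicit Arguments. Unset Strict Implicit. Unset Printing Implicit Defensive.
Import Order.TTheory GRing.Theory Num.Theory.
Import numFieldNormedType.Exports.
Local Open Scope classical_set_scope.
Local Open Scope ring_scope.

Section SDR.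
Context {R : realType}.

Definition ones (k : nat) : 'cV[R]_k := const_mx 1.

Definition psd (k : nat) (X : 'M[R]_k) : Prop :=
  X^T = X /\ forall x : 'cV[R]_k, 0 <= (x^T *m X *m x) 0 0.

Definition calX (m : nat) : set 'M[R]_(m + 1) :=
  [set X | psd X /\ forall i, X i i = 1].
Arguments calX : clear implicits.

Definition Mmat (m : nat) : 'M[R]_(m, m + 1) := row_mx 1%:M (- ones m).

Definition calH (m : nat) : set 'M[R]_(m + 1) :=
  [set X | \tr (Mmat m *m X *m (Mmat m)^T) = 1].
Arguments calH : clear implicits.

Definition L0 (n m : nat) (H : 'M[R]_(n, m)) : 'M[R]_(m + 1) :=
  (Mmat m)^T *m H^T *m H *m Mmat m.

(* tau = min_{X in cal_X cap cal_H} Tr(L_0 X)  (the minimum is attained,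
   so it is the infimum) *)
Definition tau (n m : nat) (H : 'M[R]_(n, m)) : R :=
  inf [set \tr (L0 H *m X) | X in calX m `&` calH m].

Definition Lmat (n m : nat) (H : 'M[R]_(n, m)) (y : 'cV[R]_n) : 'M[R]_(m + 1) :=
  block_mx (H^T *m H) (- (H^T *m y)) (- (y^T *m H)) (y^T *m y).

Definition optimal_selection (m : nat) (sel : 'M[R]_(m + 1) -> 'M[R]_(m + 1)) : Prop :=
  forall L : 'M[R]_(m + 1),
    calX m (sel L) /\ forall X, calX m X -> \tr (L *m sel L) <= \tr (L *m X).

Definition sgn (x : R) : R := if 0 < x then 1 else -1.

Definition s_SDR (n m : nat) (sel : 'M[R]_(m + 1) -> 'M[R]_(m + 1))
  (H : 'M[R]_(n, m)) (y : 'cV[R]_n) : 'cV[R]_m :=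
  \col_(i < m) sgn (sel (Lmat H y) (lshift 1 i) (rshift m ord0)).

Definition eln (x : \bar R) : \bar R :=
  match x with
  | r%:E => if (0 < r)%R then (ln r)%:E else -oo
  | +oo => +oo
  | -oo => -oo
  end%E.

(* f(rho) \dot<= rho^{-d}  :<=>  limsup_{rho -> oo} ln f(rho) / ln rho <= -d *)
Definition dot_le (f : R -> \bar R) (d : R) : Prop :=
  (limf_esup (fun rho : R => eln (f rho) * ((ln rho)^-1)%:E) (pinfty_nbhs R)
     <= (- d)%:E)%E.

End SDR.

(* Noise model: for the given rho, the joint law of (H, v) is
   law(H) (x) N(0, rho^{-1} I_n), i.e. v is independent of H and has i.i.d.
   N(0, rho^{-1}) entries; stated on measurable rectangles (which generate
   the product sigma-algebra). normal_prob takes the standard deviation. *)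
Definition gauss_noise_indep {R : realType} {d : measure_display}
  {Omega : measurableType d} (P : probability Omega R) (n m : nat)
  (H : Omega -> 'M[R]_(n, m)) (v : Omega -> 'cV[R]_n) (rho : R) : Prop :=
  forall (A : 'I_n -> 'I_m -> set R) (B : 'I_n -> set R),
    (forall i j, measurable (A i j)) -> (forall i, measurable (B i)) ->
    P [set w | (forall i j, A i j (H w i j)) /\ (forall i, B i (v w i 0))] =
    (P [set w | forall i j, A i j (H w i j)] *
     \prod_(i < n) normal_prob 0 (Num.sqrt (rho^-1)) (B i))%E.

From HB Require Import structures.
From mathcomp Require Import all_boot all_order all_algebra.
From mathcomp Require Import all_classical all_reals all_analysis.
From mathcomp Require Import ring lra measurable_realfun.
Set Implicit Arguments. Unset Strict Implicit. Unset Printing Implicit Defensive.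
Import Order.TTheory GRing.Theory Num.Theory.
Import numFieldNormedType.Exports.
Local Open Scope classical_set_scope.
Local Open Scope ring_scope.

(* Write [Q_B(X) = Tr(B X B^T)], [J = e e^T], and [X] for the selected optimum.
   If the SDR estimate is wrong, some [X_{i,m+1} <= 0], so [Q_M(X) >= 2].
   Optimality of [X] against the feasible [J] gives [Q_A(X) <= |v|^2] for
   [A = [H, -y]], and [H M = A + [0, v]] with the parallelogram law gives
   [Tr(L0 X) = Q_HM(X) <= 4 |v|^2].  As [M e = 0], the mixture of [J] and [X]
   lying on [cal_H] has objective [Q_HM(X) / Q_M(X)], hence [tau <= 2 |v|^2].
   So an error at SNR [rho] forces [tau <= rho^-a] or [|v|^2 > rho^-a / 2]: the
   first event has probability [rho^(-a d + o(1))], the second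
   [exp(-Omega(rho^(1-a)))] by the Gaussian tail, and [a -> 1] gives [d]. *)

Section QuadraticTrace.
Variable R : realType.

Definition mxquad p k (B : 'M[R]_(p, k)) (X : 'M[R]_k) : R := \tr (B *m X *m B^T).

Lemma mxquad_rows p k (B : 'M[R]_(p, k)) X :
  mxquad B X = \sum_j (row j B *m X *m (row j B)^T) 0 0.
Proof.
apply: eq_bigr => j _; rewrite !mxE; apply: eq_bigr => l _.
by rewrite -row_mul !mxE.
Qed.

Lemma psd_form_ge0 k (X : 'M[R]_k) (r : 'rV[R]_k) : psd X -> 0 <= (r *m X *m r^T) 0 0.
Proof. by move=> [_ X_ge0]; have := X_ge0 r^T; rewrite trmxK. Qed.

Lemma mxquad_ge0 p k (B : 'M[R]_(p, k)) X : psd X -> 0 <= mxquad B X.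
Proof. by move=> Xpsd; rewrite mxquad_rows; apply: sumr_ge0 => j _; exact: psd_form_ge0. Qed.

Lemma mxquad_parallelogram p k (B C : 'M[R]_(p, k)) X :
  mxquad (B + C) X + mxquad (B - C) X = 2 * mxquad B X + 2 * mxquad C X.
Proof.
have trD : (B + C)^T = B^T + C^T by apply/matrixP => i j; rewrite !mxE.
have trB : (B - C)^T = B^T - C^T by apply/matrixP => i j; rewrite !mxE.
rewrite /mxquad trD trB !mulmxDl !mulmxDr !mulmxN !mulNmx !mxtraceD !raddfN /= opprK; ring.
Qed.

Lemma mxquad_comb p k (B : 'M[R]_(p, k)) X Y a b :
  mxquad B (a *: X + b *: Y) = a * mxquad B X + b * mxquad B Y.
Proof. by rewrite /mxquad mulmxDr mulmxDl -!scalemxAr -!scalemxAl !linearD !linearZ. Qed.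

Lemma mxquad_outer p k (B : 'M[R]_(p, k)) (u : 'cV[R]_k) :
  mxquad B (u *m u^T) = \sum_j (B *m u) j 0 ^+ 2.
Proof.
rewrite /mxquad !mulmxA -mulmxA -trmx_mul.
by apply: eq_bigr => j _; rewrite !mxE big_ord1 !mxE expr2.
Qed.

Lemma form_delta k (X : 'M[R]_k) (a b : 'I_k) :
  (delta_mx (0 : 'I_1) a *m X *m (delta_mx (0 : 'I_1) b)^T) 0 0 = X a b.
Proof. by rewrite -rowE trmx_delta -colE !mxE. Qed.

Lemma form_delta_sub k (X : 'M[R]_k) (a b : 'I_k) :
  let r := delta_mx (0 : 'I_1) a - delta_mx 0 b in
  (r *m X *m r^T) 0 0 = X a a - X a b - X b a + X b b.
Proof.
have entryB (A B : 'M[R]_1) : (A - B) 0 0 = A 0 0 - B 0 0 by rewrite !mxE.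
rewrite /= linearB /= !mulmxBl !mulmxBr !entryB !form_delta; ring.
Qed.

Lemma psd_outer k (u : 'cV[R]_k) : psd (u *m u^T).
Proof.
split=> [|x]; first by rewrite trmx_mul trmxK.
rewrite !mulmxA -mulmxA -[u^T *m x]trmxK trmx_mul trmxK.
by rewrite mxE big_ord1 !mxE -expr2 sqr_ge0.
Qed.

End QuadraticTrace.

Section SDRBound.
Variables (R : realType) (n m : nat).

Definition ilast : 'I_(m + 1) := rshift m (0 : 'I_1).

Lemma lshift_ilastF (j : 'I_m) : (lshift 1 j == ilast) = false.
Proof. by apply/negbTE; rewrite -val_eqE /= addn0 neq_ltn ltn_ord. Qed.

Lemma row_Mmat (j : 'I_m) :
  row j (Mmat m) = delta_mx 0 (lshift 1 j) - delta_mx 0 ilast :> 'rV[R]_(m + 1).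
Proof.
apply/rowP => k; rewrite /Mmat; case: (split_ordP k) => k' ->.
  rewrite [LHS]mxE row_mxEl !mxE lshift_ilastF subr0.
  by rewrite (inj_eq (@lshift_inj _ _)) eq_sym.
rewrite [LHS]mxE row_mxEr !mxE (ord1 k') /= (eq_sym (rshift m 0) (lshift 1 j)).
by rewrite lshift_ilastF /ilast eqxx sub0r.
Qed.

Lemma ones_col_mx : ones (m + 1) = col_mx (ones m) (ones 1) :> 'cV[R]_(m + 1).
Proof.
by apply/matrixP => i j; case: (split_ordP i) => k ->; rewrite ?col_mxEu ?col_mxEd !mxE.
Qed.

Lemma Mmat_ones : Mmat m *m ones (m + 1) = 0 :> 'cV[R]_m.
Proof.
rewrite ones_col_mx /Mmat mul_row_col mul1mx; apply/matrixP => i j.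
by rewrite !mxE big_ord1 !mxE mulr1 subrr.
Qed.

Lemma calX_ones_outer : calX (ones (m + 1) *m (ones (m + 1))^T : 'M[R]_(m + 1)).
Proof. by split=> [|i]; [exact: psd_outer | rewrite !mxE big_ord1 !mxE mulr1]. Qed.

Lemma calX_convex (X Y : 'M[R]_(m + 1)) (l : R) : calX X -> calX Y ->
  0 <= l <= 1 -> calX ((1 - l) *: X + l *: Y).
Proof.
move=> [[XT Xge0] Xd] [[YT Yge0] Yd] /andP[l0 l1]; split; [split|].
- by rewrite linearD !linearZ /= XT YT.
- move=> x; rewrite mulmxDr mulmxDl -!scalemxAr -!scalemxAl.
  move: (x^T *m X *m x) (x^T *m Y *m x) (Xge0 x) (Yge0 x) => a b a0 b0.
  rewrite !mxE; nra.
- by move=> i; rewrite !mxE Xd Yd; ring.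
Qed.

Lemma mxquad_Mmat_ge2 (X : 'M[R]_(m + 1)) (i : 'I_m) :
  calX X -> X (lshift 1 i) ilast <= 0 -> 2 <= mxquad (Mmat m) X.
Proof.
move=> [[XT Xge0] Xd] Xi; rewrite mxquad_rows (bigD1 i) //= row_Mmat form_delta_sub.
have -> : X ilast (lshift 1 i) = X (lshift 1 i) ilast by rewrite -{1}XT mxE.
have : 0 <= \sum_(j < m | j != i) (row j (Mmat m) *m X *m (row j (Mmat m))^T) 0 0.
  by apply: sumr_ge0 => j _; apply: psd_form_ge0.
rewrite !Xd; lra.
Qed.

Lemma mxquad_row_mx0 (v : 'cV[R]_n) (X : 'M[R]_(m + 1)) :
  mxquad (row_mx 0 v) X = X ilast ilast * \sum_j v j 0 ^+ 2.
Proof.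
rewrite mxquad_rows mulr_sumr; apply: eq_bigr => j _.
have -> : row j (row_mx 0 v) = v j 0 *: delta_mx 0 ilast.
  apply/rowP => k; case: (split_ordP k) => k' ->.
    by rewrite [LHS]mxE row_mxEl !mxE lshift_ilastF mulr0.
  by rewrite [LHS]mxE row_mxEr !mxE (ord1 k') -/ilast !eqxx mulr1.
have entryZ a (A : 'M[R]_1) : (a *: A) 0 0 = a * A 0 0 by rewrite mxE.
rewrite linearZ /= -scalemxAl -scalemxAr -scalemxAl !entryZ form_delta; ring.
Qed.

Lemma L0_trace (H : 'M[R]_(n, m)) X : \tr (L0 H *m X) = mxquad (H *m Mmat m) X.
Proof. by rewrite /L0 /mxquad trmx_mul (mxtrace_mulC (H *m Mmat m *m X)) !mulmxA. Qed.

Lemma Lmat_trace (H : 'M[R]_(n, m)) y X :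
  \tr (Lmat H y *m X) = mxquad (row_mx H (- y)) X.
Proof.
have -> : Lmat H y = (row_mx H (- y))^T *m row_mx H (- y).
  have trN : (- y)^T = - y^T by apply/matrixP => i j; rewrite !mxE.
  by rewrite tr_row_mx mul_col_row /Lmat trN mulmxN mulNmx mulNmx mulmxN opprK.
by rewrite /mxquad (mxtrace_mulC (row_mx H (- y) *m X)) !mulmxA.
Qed.

Lemma tau_le_mxquad (H : 'M[R]_(n, m)) X : calX X -> 1 <= mxquad (Mmat m) X ->
  tau H <= mxquad (H *m Mmat m) X / mxquad (Mmat m) X.
Proof.
set t := mxquad (Mmat m) X => Xx t_ge1.
set J : 'M[R]_(m + 1) := ones (m + 1) *m (ones (m + 1))^T.
have annihJ p (B : 'M[R]_(p, m)) : mxquad (B *m Mmat m) J = 0.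
  rewrite mxquad_outer big1 // => j _.
  by rewrite -mulmxA Mmat_ones mulmx0 mxE expr0n.
have t_gt0 : 0 < t by lra.
set Y := (1 - t^-1) *: J + t^-1 *: X.
have Yx : calX Y.
  apply: calX_convex calX_ones_outer Xx _.
  by rewrite invr_ge0 ltW //= invf_le1.
have YH : calH Y.
  have := annihJ _ 1%:M; rewrite mul1mx => annihJ1.
  by rewrite /calH /= -/(mxquad _ _) mxquad_comb annihJ1 -/t mulr0 add0r mulVf ?gt_eqF.
have tau_lb : has_lbound [set \tr (L0 H *m Z) | Z in @calX R m `&` @calH R m].
  by exists 0 => _ [Z [[Zpsd _] _] <-]; rewrite L0_trace mxquad_ge0.
apply: (le_trans (ge_inf tau_lb (ex_intro2 _ _ Y (conj Yx YH) erefl))).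
by rewrite L0_trace mxquad_comb annihJ mulr0 add0r mulrC.
Qed.

Lemma tau_le_noise_energy (H : 'M[R]_(n, m)) (v : 'cV[R]_n) sel :
  optimal_selection sel -> s_SDR sel H (H *m ones m + v) != ones m ->
  tau H <= 2 * \sum_j v j 0 ^+ 2.
Proof.
move=> sel_opt err; set y := H *m ones m + v; set X := sel (Lmat H y).
set E := \sum_j v j 0 ^+ 2.
have [Xx X_min] := sel_opt (Lmat H y); have [Xpsd Xd] := Xx.
have [i Xi] : exists i, X (lshift 1 i) ilast <= 0.
  apply: contrapT => Xpos; move/negP: err; apply; apply/eqP/matrixP => i j.
  by rewrite !mxE /sgn ifT // ltNge; apply/negP => Xi; apply: Xpos; exists i.
set A := row_mx H (- y); set B : 'M[R]_(n, m + 1) := row_mx 0 v.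
have AB : A + B = H *m Mmat m.
  by rewrite /A /B /Mmat mul_mx_row mulmx1 mulmxN add_row_mx addr0 /y opprD addrNK.
have QA : mxquad A X <= E.
  have := X_min _ calX_ones_outer; rewrite !Lmat_trace mxquad_outer -/A.
  have -> : A *m ones (m + 1) = - v.
    have ones1 : ones 1 = 1%:M :> 'M[R]_1.
      by apply/matrixP => a b; rewrite (ord1 a) (ord1 b) !mxE.
    by rewrite ones_col_mx mul_row_col ones1 mulmx1 /y opprD addrA subrr add0r.
  by under eq_bigr do rewrite mxE sqrrN.
have QB : mxquad B X = E by rewrite mxquad_row_mx0 Xd mul1r.
have QHM : mxquad (H *m Mmat m) X <= 4 * E.
  have := mxquad_parallelogram A B X; rewrite AB.
  have := mxquad_ge0 (A - B) Xpsd; lra.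
have t_ge2 := mxquad_Mmat_ge2 Xx Xi.
apply: (le_trans (tau_le_mxquad H Xx _)); first lra.
rewrite ler_pdivrMr; last lra.
have := mxquad_ge0 (H *m Mmat m) Xpsd; nra.
Qed.

Lemma tau_le_small_noise (H : 'M[R]_(n, m)) (v : 'cV[R]_n) sel (c : R) :
  optimal_selection sel -> s_SDR sel H (H *m ones m + v) != ones m ->
  (forall i, v i 0 ^+ 2 <= c) -> tau H <= 2 * (n%:R * c).
Proof.
move=> sel_opt err v_le; apply: le_trans (tau_le_noise_energy sel_opt err) _.
rewrite ler_pM2l // mulr_natl -[n in _ *+ n]card_ord -sumr_const.
by apply: ler_sum => i _; exact: v_le.
Qed.

End SDRBound.

Section GaussianNoise.
Variable R : realType.

Lemma measurable_abs_gt (s : R) : measurable [set x : R | s < `|x|].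
Proof.
have := normr_measurable measurableT (measurable_itv `]s, +oo[).
by rewrite setTI; congr measurable; apply/seteqP; split => x /=; rewrite in_itv /= andbT.
Qed.

Lemma normal_pdf_tail_le (sig s x : R) : 0 < sig -> 0 <= s -> s < `|x| ->
  normal_pdf 0 sig x <=
  2 * expR (- s ^+ 2 / (4 * sig ^+ 2)) * normal_pdf 0 (2 * sig) x.
Proof.
move=> sig0 s0 sx.
have sig_neq0 : sig != 0 by rewrite gt_eqF.
have sig2_neq0 : 2 * sig != 0 by rewrite mulf_neq0 // pnatr_eq0.
rewrite /normal_pdf (negbTE sig_neq0) (negbTE sig2_neq0) /normal_peak /normal_fun !subr0.
have -> : Num.sqrt ((2 * sig) ^+ 2 * pi *+ 2) = 2 * Num.sqrt (sig ^+ 2 * pi *+ 2).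
  rewrite exprMn -mulrA -mulrnAr sqrtrM ?sqr_ge0 //.
  by rewrite sqrtr_sqr ger0_norm.
set p := Num.sqrt _.
have p0 : 0 < p by rewrite sqrtr_gt0 mulrn_wgt0 // mulr_gt0 ?pi_gt0 // exprn_gt0.
set a := - s ^+ 2 / _; set b := - x ^+ 2 / ((2 * sig) ^+ 2 *+ 2).
have -> : 2 * expR a * ((2 * p)^-1 * expR b) = p^-1 * expR (a + b).
  by rewrite expRD invfM; field; rewrite gt_eqF.
rewrite ler_pM2l ?invr_gt0 // ler_expR /a /b.
have s2x2 : s ^+ 2 <= x ^+ 2 by have := real_normK (num_real x); nra.
set w := (sig ^+ 2)^-1.
have w0 : 0 < w by rewrite invr_gt0 exprn_gt0.
have -> : - x ^+ 2 / (sig ^+ 2 *+ 2) = - x ^+ 2 * w / 2 by rewrite /w; field.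
have -> : - s ^+ 2 / (4 * sig ^+ 2) = - s ^+ 2 * w / 4 by rewrite /w; field.
have -> : - x ^+ 2 / ((2 * sig) ^+ 2 *+ 2) = - x ^+ 2 * w / 8 by rewrite /w; field.
nra.
Qed.

(* Dominate the density by that of the wider N(0, 4 sig^2), which has mass 1. *)
Lemma normal_prob_abs_gt_le (sig s : R) : 0 < sig -> 0 <= s ->
  (normal_prob 0 sig [set x : R | (s < `|x|)%R] <=
   (2 * expR (- s ^+ 2 / (4 * sig ^+ 2)))%:E)%E.
Proof.
move=> sig0 s0; set K := 2 * expR _.
have K0 : 0 <= K by rewrite mulr_ge0 // expR_ge0.
have ms := measurable_abs_gt s.
have mpdf (a : R) : measurable_fun [set x : R | s < `|x|] (normal_pdf 0 a).
  by apply: measurable_funTS; exact: measurable_normal_pdf.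
rewrite /normal_prob (@le_trans _ _ (\int[lebesgue_measure]_(x in [set x : R | (s < `|x|)%R])
    (K * normal_pdf 0 (2 * sig) x)%:E))%E //.
  apply: ge0_le_integral => //.
  - by move=> x _; rewrite lee_fin normal_pdf_ge0.
  - by apply/measurable_EFinP; exact: mpdf.
  - by apply/measurable_EFinP; apply: measurable_funM => //; exact: mpdf.
  - by move=> x sx; rewrite lee_fin normal_pdf_tail_le.
under eq_integral do rewrite EFinM.
rewrite ge0_integralZl //; last 2 first.
- by apply/measurable_EFinP; exact: mpdf.
- by move=> x _; rewrite lee_fin normal_pdf_ge0.
rewrite -[leRHS]mule1 lee_wpmul2l ?lee_fin //.
exact: (probability_le1 (normal_prob 0 (2 * sig)) ms).
Qed.

Lemma le_measure_bigsetU d (T : measurableType d) (mu : {measure set T -> \bar R})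
  (I : Type) (r : seq I) (F : I -> set T) : (forall i, measurable (F i)) ->
  (mu (\big[setU/set0]_(i <- r) F i) <= \sum_(i <- r) mu (F i))%E.
Proof.
move=> mF; elim: r => [|i r IH]; first by rewrite !big_nil measure0.
rewrite !big_cons; apply: le_trans (measureU2 _ _ _) _ => //.
  exact: bigsetU_measurable.
exact: leeD.
Qed.

Section NoiseBound.
Variables (d : measure_display) (Omega : measurableType d) (P : probability Omega R).
Variables (n m : nat) (H : Omega -> 'M[R]_(n, m)) (v : Omega -> 'cV[R]_n) (rho : R).
Hypothesis rho_gt0 : 0 < rho.
Hypothesis v_gauss : gauss_noise_indep P H v rho.

Lemma noise_abs_gt_le (s : R) (i : 'I_n) : 0 <= s ->
  (P [set w | (s < `|v w i 0|)%R] <= (2 * expR (- (rho * s ^+ 2) / 4))%:E)%E.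
Proof.
move=> s0; pose B k : set R := if k == i then [set x | s < `|x|] else setT.
have mB k : measurable (B k).
  by rewrite /B; case: eqP => _; [exact: measurable_abs_gt | exact: measurableT].
have := @v_gauss (fun _ _ => [set: R]) B (fun _ _ => measurableT) mB.
have -> : [set w | (forall k l, [set: R] (H w k l)) /\ (forall k, B k (v w k 0))] =
          [set w | s < `|v w i 0|].
  apply/seteqP; split => w /=; first by move=> [_ /(_ i)]; rewrite /B eqxx.
  by move=> vi; split => // k; rewrite /B; case: eqP => [->|].
have -> : [set w | forall k l, [set: R] (H w k l)] = setT by apply/seteqP; split.
rewrite probability_setT mul1e (bigD1 i) //= {1}/B eqxx big1 ?mule1 => [->|k /negbTE ki].
  have sig0 : 0 < Num.sqrt rho^-1 by rewrite sqrtr_gt0 invr_gt0.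
  have -> : - (rho * s ^+ 2) / 4 = - s ^+ 2 / (4 * Num.sqrt rho^-1 ^+ 2).
    by rewrite sqr_sqrtr ?invr_ge0 ?ltW //; field; rewrite gt_eqF.
  exact: normal_prob_abs_gt_le.
by rewrite /B ki probability_setT.
Qed.

Variable sel : 'M[R]_(m + 1) -> 'M[R]_(m + 1).
Hypothesis sel_opt : optimal_selection sel.
Hypothesis v_measurable : forall i, measurable_fun setT (fun w => v w i 0).

Lemma prob_sdr_error_le (r : R) : 0 < r ->
  measurable [set w | tau (H w) <= r^-1] ->
  measurable [set w | s_SDR sel (H w) (H w *m ones m + v w) != ones m] ->
  (P [set w | s_SDR sel (H w) (H w *m ones m + v w) != ones m] <=
   P [set w | (tau (H w) <= r^-1)%R] +
   (n%:R * (2 * expR (- (rho / r) / (8 * n.+1%:R))))%:E)%E.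
Proof.
(* Using [n.+1] rather than [n] keeps the rate [(8 n.+1)^-1] positive for [n = 0]. *)
move=> r_gt0 mT mE; set c := r^-1 / (2 * n.+1%:R); set s := Num.sqrt c.
have c_ge0 : 0 <= c by rewrite divr_ge0 ?invr_ge0 ?ltW.
have nc : n%:R * c <= r^-1 / 2.
  have -> : n%:R * c = r^-1 / 2 * (n%:R / n.+1%:R).
    by rewrite /c; field; rewrite nat1r pnatr_eq0 (gt_eqF r_gt0).
  apply: ler_piMr; first by rewrite divr_ge0 // invr_ge0 ltW.
  by rewrite ler_pdivrMr // mul1r ler_nat.
pose F i := [set w | s < `|v w i 0|].
have mF i : measurable (F i).
  by have := v_measurable i measurableT (measurable_abs_gt s); rewrite setTI.
have sub : [set w | s_SDR sel (H w) (H w *m ones m + v w) != ones m] `<=`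
           [set w | tau (H w) <= r^-1] `|` \big[setU/set0]_(i < n) F i.
  move=> w /= err; case: (leP (tau (H w)) r^-1) => [|tau_gt]; [by left | right].
  rewrite -bigcup_seq; apply: contrapT => small.
  suff : tau (H w) <= 2 * (n%:R * c) by lra.
  apply: tau_le_small_noise sel_opt err _ => i.
  rewrite -(sqr_sqrtr c_ge0) -real_normK ?num_real // lerXn2r ?nnegrE // leNgt.
  by apply/negP => vi; apply: small; exists i; rewrite //= mem_index_enum.
apply: le_trans (le_measure _ _ _ sub) _; rewrite ?inE //.
  by apply: measurableU => //; exact: bigsetU_measurable.
apply: le_trans (measureU2 _ _ _) _ => //; first exact: bigsetU_measurable.
rewrite leeD2l // (le_trans (le_measure_bigsetU _ _ mF)) //.
have -> : - (rho / r) / (8 * n.+1%:R) = - (rho * s ^+ 2) / 4.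
  by rewrite sqr_sqrtr // /c; field; rewrite nat1r pnatr_eq0 (gt_eqF r_gt0).
set K := 2 * expR _.
have -> : (n%:R * K)%:E = (\sum_(i < n) K%:E)%E.
  by rewrite sumEFin sumr_const card_ord mulr_natl.
apply: lee_sum => i _.
exact: noise_abs_gt_le (sqrtr_ge0 c).
Qed.

End NoiseBound.

End GaussianNoise.

Section LimfEsup.
Variables (R : realType) (T : choiceType) (X : filteredType T) (F : set_system X).

Lemma limf_esup_le (h : X -> \bar R) (c : \bar R) :
  (\forall x \near F, (h x <= c)%E) -> (limf_esup h F <= c)%E.
Proof.
move=> h_le; apply: le_trans (ereal_inf_lbound _) _; first by exists [set x | (h x <= c)%E].
by apply: ge_ereal_sup => _ [x hx <-].
Qed.

Lemma limf_esup_lt (h : X -> \bar R) (c : \bar R) : Filter F ->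
  (limf_esup h F < c)%E -> \forall x \near F, (h x < c)%E.
Proof.
move=> F_filter /ereal_inf_lt [_ [V FV <-] supV]; apply: filterS FV => x Vx.
by apply: le_lt_trans supV; apply: ereal_sup_ubound; exists x.
Qed.

End LimfEsup.

Section DotLe.
Variable R : realType.
Implicit Types (f g : R -> \bar R) (d : R).

Lemma eln_ratio_leE (p : \bar R) (rho e : R) : 1 < rho ->
  (eln p * (ln rho)^-1%:E <= e%:E)%E = (p <= (rho `^ e)%:E)%E.
Proof.
move=> rho_gt1; have L_gt0 : 0 < ln rho by rewrite ln_gt0.
have rho_gt0 : 0 < rho by lra.
rewrite /powR gt_eqF //.
case: p => [r| |] /=; rewrite ?lee_fin.
- case: ifPn => r_gt0; last first.
    rewrite gt0_mulNye ?lte_fin ?invr_gt0 // leNye; apply/esym.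
    by apply: le_trans (expR_ge0 _); rewrite leNgt.
  rewrite -EFinM lee_fin ler_pdivrMr // -ler_expR lnK //.
- by rewrite gt0_mulye ?lte_fin ?invr_gt0 // leye_eq.
- by rewrite gt0_mulNye ?lte_fin ?invr_gt0 // !leNye.
Qed.

Lemma powR_pinfty_ge (a M : R) : 0 < a -> \forall rho \near +oo, M <= rho `^ a.
Proof.
move=> a_gt0; near=> rho.
have M0 : 0 <= `|M| := normr_ge0 M.
have B0 : 0 <= `|M| `^ a^-1 := powR_ge0 _ _.
have rhoB : `|M| `^ a^-1 <= rho by near: rho; exact: nbhs_pinfty_ge (num_real _).
rewrite (le_trans (ler_norm M)) // -[leLHS](powRr1 M0) -(mulVf (lt0r_neq0 a_gt0)) powRrM.
by apply: (ge0_ler_powR (ltW a_gt0)); rewrite ?nnegrE //; lra.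
Unshelve. all: by end_near.
Qed.

Lemma dot_leP f d :
  dot_le f d <-> forall e, 0 < e -> \forall rho \near +oo, (f rho <= (rho `^ (e - d))%:E)%E.
Proof.
split=> [f_dot e e_gt0 | f_le].
  have : (limf_esup (fun rho => eln (f rho) * (ln rho)^-1%:E) (pinfty_nbhs R) < (e - d)%:E)%E.
    by apply: le_lt_trans f_dot _; rewrite lte_fin; lra.
  move=> /limf_esup_lt lt_ev; near=> rho.
  rewrite -eln_ratio_leE; last by near: rho; exact: nbhs_pinfty_gt (num_real _).
  by apply: ltW; near: rho; exact: lt_ev.
apply/lee_addgt0Pr => e e_gt0; apply: limf_esup_le; near=> rho.
rewrite -EFinD addrC eln_ratio_leE; last by near: rho; exact: nbhs_pinfty_gt (num_real _).
by near: rho; exact: f_le.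
Unshelve. all: by end_near.
Qed.

Lemma dot_le_le f g d :
  (\forall rho \near +oo, (f rho <= g rho)%E) -> dot_le g d -> dot_le f d.
Proof.
move=> fg /dot_leP g_le; apply/dot_leP => e e_gt0; near=> rho.
by apply: le_trans (_ : g rho <= _)%E; near: rho; [exact: fg | exact: g_le].
Unshelve. all: by end_near.
Qed.

Lemma dot_leD f g d : dot_le f d -> dot_le g d -> dot_le (fun rho => f rho + g rho)%E d.
Proof.
move=> /dot_leP f_le /dot_leP g_le; apply/dot_leP => e e_gt0.
have e2_gt0 : 0 < e / 2 by rewrite divr_gt0.
near=> rho.
have rho_gt0 : 0 < rho by near: rho; exact: nbhs_pinfty_gt (num_real _).
have two_le : 2 <= rho `^ (e / 2) by near: rho; exact: powR_pinfty_ge.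
have -> : e - d = e / 2 + (e / 2 - d) by field.
rewrite powRD ?(gt_eqF rho_gt0) ?implybT //.
apply: le_trans (leeD (_ : f rho <= (rho `^ (e / 2 - d))%:E)
                      (_ : g rho <= (rho `^ (e / 2 - d))%:E))%E _.
- by near: rho; exact: f_le.
- by near: rho; exact: g_le.
rewrite -EFinD lee_fin; have := powR_ge0 rho (e / 2 - d); nra.
Unshelve. all: by end_near.
Qed.

Lemma dot_le_comp_powR f d (a : R) :
  0 < a -> dot_le f d -> dot_le (fun rho => f (rho `^ a)) (a * d).
Proof.
move=> a_gt0 /dot_leP f_le; apply/dot_leP => e e_gt0.
have [M [_ M_le]] := f_le (e / a) (divr_gt0 e_gt0 a_gt0).
near=> rho.
have -> : e - a * d = a * (e / a - d) by field; exact: lt0r_neq0.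
rewrite powRrM; apply: M_le.
suff : M + 1 <= rho `^ a by lra.
by near: rho; exact: powR_pinfty_ge.
Unshelve. all: by end_near.
Qed.

Lemma dot_le_expR_powR (K c b : R) d : 0 <= K -> 0 < c -> 0 < b ->
  dot_le (fun rho => (K * expR (- (c * rho `^ b)))%:E) d.
Proof.
move=> K_ge0 c_gt0 b_gt0; apply/dot_leP => e _; set D := e - d.
set t := c * b ^+ 2 / 2; have t_gt0 : 0 < t by rewrite divr_gt0 ?mulr_gt0 ?exprn_gt0.
set L0 := 1 + (K + `|D|) / t.
have KD_ge0 : 0 <= K + `|D| by apply: addr_ge0.
have L0_ge1 : 1 <= L0 by rewrite lerDl divr_ge0 // ltW.
(* Past [ln rho = L0], [c rho^b >= t (ln rho)^2] dominates [K - D ln rho]. *)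
near=> rho.
have rho_ge : expR L0 <= rho by near: rho; exact: nbhs_pinfty_ge (num_real _).
have rho_gt0 : 0 < rho by apply: lt_le_trans rho_ge; exact: expR_gt0.
set L := ln rho.
have L_ge : L0 <= L by rewrite -[L0]expRK ler_ln ?posrE ?expR_gt0.
have tL : K + `|D| <= t * (L - 1).
  have -> : K + `|D| = t * (L0 - 1) by rewrite /L0; field; rewrite gt_eqF.
  by rewrite ler_pM2l //; lra.
have L_ge1 : 1 <= L := le_trans L0_ge1 L_ge.
have expbL : t * L ^+ 2 <= c * expR (b * L).
  have expb : 1 + (b * L) ^+ 2 / 2 <= expR (b * L).
    exact: expR_ge1Dxn 1 (mulr_ge0 (ltW b_gt0) (le_trans ler01 L_ge1)).
  have := ler_wpM2l (ltW c_gt0) expb; rewrite /t exprMn; nra.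
have K_le : K <= expR K by have := expR_ge1Dx K; lra.
rewrite lee_fin /powR (gt_eqF rho_gt0) -/L.
apply: le_trans (ler_wpM2r (expR_ge0 _) K_le) _; rewrite -expRD ler_expR.
have := ler_wpM2l (le_trans ler01 L_ge1) tL.
have := ler_norm D; have := lerNnormlW (lexx `|D|); nra.
Unshelve. all: by end_near.
Qed.

Lemma dot_le_approx f d :
  0 <= d -> (forall a, 0 < a < 1 -> dot_le f (a * d)) -> dot_le f d.
Proof.
move=> d_ge0 f_dot; apply/dot_leP => e e_gt0.
set den := 2 * (d + 1) + e; have den_gt0 : 0 < den by rewrite /den; lra.
set a := 2 * (d + 1) / den.
have a_den : a * den = 2 * (d + 1) by rewrite /a divfK ?gt_eqF.
have a01 : 0 < a < 1.
  by rewrite divr_gt0 /= ?ltr_pdivrMr ?mul1r /den; lra.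
have /dot_leP f_le := f_dot a a01.
near=> rho.
apply: le_trans (_ : f rho <= (rho `^ (e / 2 - a * d))%:E)%E _.
  by near: rho; apply: f_le; rewrite divr_gt0.
rewrite lee_fin; apply: ler_powR; first by near: rho; exact: nbhs_pinfty_ge (num_real _).
suff : d * (1 - a) * den <= e / 2 * den by rewrite ler_pM2r //; lra.
rewrite -mulrA mulrBl a_den mul1r /den; nra.
Unshelve. all: by end_near.
Qed.

End DotLe.

Unset Implicit Arguments.
Set Strict Implicit.

Theorem lemma2 (R : realType) (dsp : measure_display) (Omega : measurableType dsp)
  (P : probability Omega R) (n m : nat)
  (H : Omega -> 'M[R]_(n, m)) (v : R -> Omega -> 'cV[R]_n)
  (sel : 'M[R]_(m + 1) -> 'M[R]_(m + 1)) (d : R) :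
  0 <= d ->
  optimal_selection sel ->
  (forall i j, measurable_fun setT (fun w => H w i j)) ->
  (forall rho, 0 < rho -> forall i, measurable_fun setT (fun w => v rho w i 0)) ->
  (forall rho, 0 < rho -> gauss_noise_indep P H (v rho) rho) ->
  (forall rho, 0 < rho -> measurable [set w | tau (H w) <= rho^-1]) ->
  (forall rho, 0 < rho ->
     measurable [set w | s_SDR sel (H w) (H w *m ones m + v rho w) != ones m]) ->
  dot_le (fun rho => P [set w | tau (H w) <= rho^-1]) d ->
  dot_le (fun rho => P [set w | s_SDR sel (H w) (H w *m ones m + v rho w) != ones m]) d.
Proof.
move=> d_ge0 sel_opt _ v_meas v_gauss mT mE tau_dot.
apply: dot_le_approx d_ge0 _ => a /andP[a_gt0 a_lt1].
pose K : R := n%:R * 2; pose c : R := (8 * n.+1%:R)^-1.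
apply: (dot_le_le (g := fun rho => P [set w | (tau (H w) <= (rho `^ a)^-1)%R] +
                                   (K * expR (- (c * rho `^ (1 - a))))%:E)%E).
  near=> rho.
  have rho_gt0 : 0 < rho by near: rho; exact: nbhs_pinfty_gt (num_real _).
  have ra_gt0 : 0 < rho `^ a := powR_gt0 _ rho_gt0.
  apply: le_trans (prob_sdr_error_le rho_gt0 (v_gauss _ rho_gt0) sel_opt (v_meas _ rho_gt0)
                     ra_gt0 (mT _ ra_gt0) (mE _ rho_gt0)) _.
  have -> : - (rho / rho `^ a) / (8 * n.+1%:R) = - (c * rho `^ (1 - a)).
    by rewrite powRB ?(gt_eqF rho_gt0) ?implybT // powRr1 ?ltW // /c mulNr mulrC.
  by rewrite leeD2l // lee_fin /K mulrA.
apply: dot_leD.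
  exact: (dot_le_comp_powR (f := fun r => P [set w | (tau (H w) <= r^-1)%R])).
by apply: dot_le_expR_powR; rewrite ?invr_gt0 ?mulr_ge0 ?subr_gt0.
Unshelve. all: by end_near.
Qed.
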